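(* Consider robust dynamic pricing with feedback corrupted in at most $C$ rounds ($C$ known). The meta-algorithm described in the context, with the commitment subroutine \textsc{CommitKnown}, guarantees \[ \sum_{\ell\in\mathcal L}R(\ell)\le 2N_{\textsc{F}}+6C+3. \]
   Context: Robust dynamic pricing: there are $T$ rounds and an unknown valuation $v^\star\in[0,1)$. At each round $t$ the seller posts a price $p_t\in[0,1]$. The true sale indicator is $y_t=\mathbbm 1\{p_t\le v^\star\}$; the seller observes $\sigma_t\in\{0,1\}$, and at most $C$ rounds are corrupted: $|\{t\in[T]:\sigma_t\neq y_t\}|\le C$. Meta-algorithm: let $D=\lceil\log_2 T\rceil$. Consider the complete binary tree of intervals of depth $D$ with root $[0,1)$, where each non-leaf node $[L,R)$ has children $[L,M)$ and $[M,R)$, $M=(L+R)/2$; the depth-$D$ nodes are the leaves, forming the set $\mathcal L$ (each of length at most $1/T$), and $\ell^\star$ is the unique leaf containing $v^\star$. The algorithm keeps a current node $I$, initially the root, and repeats until the horizon ends: if $I=[L,R)$ is not a leaf, it performs a safety check — post $L$ and observe $\sigma_L$, post $R$ and observe $\sigma_R$; the check fails if $\sigma_L=0$ or $\sigma_R=1$ (by convention the query at $L=0$ and the query at $R=1$ always count as passing). On failure $I$ becomes its parent; otherwise it posts $M$, observes $\sigma_M$, and $I$ becomes $[M,R)$ if $\sigma_M=1$ and $[L,M)$ if $\sigma_M=0$. If $I$ is a leaf, the commitment subroutine is run on $I$; if it returns FAIL, $I$ becomes its parent. \textsc{CommitKnown}: each leaf $\ell$ has a counter $s_\ell$, initialized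 to $0$ at the start of the horizon and shared across all calls. On leaf $\ell=[L,R)$ it repeats: if $s_\ell\le C$, post $L$ and observe $\sigma_L$, post $R$ and observe $\sigma_R$; if $\sigma_L=0$ or $\sigma_R=1$, return FAIL, else increase $s_\ell$ by $1$. If $s_\ell>C$, post $L$ (and continue doing so). For a leaf $\ell$, $Q(\ell)$ is the set of rounds during which the commitment subroutine runs on $\ell$, and $R(\ell)=\sum_{t\in Q(\ell)}(v^\star-p_t\mathbbm 1\{p_t\le v^\star\})$. $N_{\textsc{F}}$ is the number of times the commitment subroutine returns FAIL on a leaf different from $\ell^\star$. *)

(* Model of the meta-algorithm with CommitKnown as a
   deterministic state machine driven by the observed feedback sequence. *)
From HB Require Import structures.
From mathcomp Require Import all_boot all_order all_algebra.
Set Implicit Arguments. Unset Strict Implicit. Unset Printing Implicit Defensive.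
Import Order.TTheory GRing.Theory Num.Theory.
Local Open Scope ring_scope.

(* Depth of the tree: D = ceil(log2 T) (up_log 2 T is the least e with T <= 2^e). *)
Definition depth (T : nat) : nat := up_log 2 T.

(* A node is a pair (d, k) with k < 2^d : the interval [k/2^d, (k+1)/2^d). *)
Section Nodes.
Variable R : realFieldType.
Definition lo (d k : nat) : R := k%:R / (2 ^ d)%:R.
Definition hi (d k : nat) : R := k.+1%:R / (2 ^ d)%:R.
Definition mid (d k : nat) : R := (k.*2.+1)%:R / (2 ^ d.+1)%:R.

(* Outcome of a query: a lower-endpoint query at price p passes iff the sale is
   observed, an upper-endpoint query passes iff no sale is observed;
   by convention queries at price 0 (lower) and 1 (upper) always pass. *)
Definition pass_low (p : R) (sigma : bool) : bool := (p == 0) || sigma.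
Definition pass_high (p : R) (sigma : bool) : bool := (p == 1) || ~~ sigma.
End Nodes.

Inductive phase :=
  | SafeL
  | SafeR of bool      (* safety check: L posted (bool = L-query passed); about to post R *)
  | SafeM
  | ComL               (* CommitKnown, s_l <= C: about to post L *)
  | ComR of bool       (* CommitKnown: L posted (bool = passed); about to post R *)
  | ComStay.           (* CommitKnown, s_l > C: post L forever *)

Record state := State {
  dep : nat;
  idx : nat;
  ph  : phase;
  cnt : nat -> nat      (* counters s_l, indexed by leaf index *)
}.

Definition is_commit (p : phase) : bool :=
  match p with ComL | ComR _ | ComStay => true | _ => false end.

Section Algo.
Variables (R : realFieldType) (T C : nat).
Let D := depth T.

(* Start of an iteration of the main loop at node (d,k) with counters s. *)
Definition enter (s : nat -> nat) (d k : nat) : state :=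
  if (d < D)%N then State d k SafeL s
  else if (s k <= C)%N then State d k ComL s else State d k ComStay s.

Definition incr (s : nat -> nat) (k : nat) : nat -> nat :=
  fun j => if j == k then (s k).+1 else s j.

Definition price (st : state) : R :=
  match ph st with
  | SafeL | ComL | ComStay => lo R (dep st) (idx st)
  | SafeR _ | ComR _ => hi R (dep st) (idx st)
  | SafeM => mid R (dep st) (idx st)
  end.

(* Transition after observing sigma for the price posted in st.
   Moving to the parent of (d,k) means moving to (d-1, k/2). *)
Definition step (st : state) (sigma : bool) : state :=
  let d := dep st in let k := idx st in let s := cnt st in
  match ph st with
  | SafeL => State d k (SafeR (pass_low (lo R d k) sigma)) s
  | SafeR okL =>
      if okL && pass_high (hi R d k) sigma then State d k SafeM s
      else enter s d.-1 k./2
  | SafeM => if sigma then enter s d.+1 k.*2.+1 else enter s d.+1 k.*2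
  | ComL => State d k (ComR (pass_low (lo R d k) sigma)) s
  | ComR okL =>
      if okL && pass_high (hi R d k) sigma then enter (incr s k) d k
      else enter s d.-1 k./2          (* FAIL *)
  | ComStay => st
  end.

Definition commit_fails (st : state) (sigma : bool) : bool :=
  match ph st with
  | ComR okL => ~~ (okL && pass_high (hi R (dep st) (idx st)) sigma)
  | _ => false
  end.

Definition init : state := enter (fun _ => 0%N) 0 0.

(* State at the start of round t (rounds are numbered 0, ..., T-1),
   given the observed feedback sequence sigma. *)
Fixpoint run (sigma : nat -> bool) (t : nat) : state :=
  match t with
  | 0 => init
  | t'.+1 => step (run sigma t') (sigma t')
  end.

Definition posted (sigma : nat -> bool) (t : nat) : R := price (run sigma t).

Definition n_corrupt (v : R) (sigma : nat -> bool) : nat :=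
  count (fun t => sigma t != (posted sigma t <= v)) (iota 0 T).

(* t is in Q(l) for the leaf l = (D, k). *)
Definition inQ (sigma : nat -> bool) (k t : nat) : bool :=
  let st := run sigma t in [&& is_commit (ph st), dep st == D & idx st == k].

(* R(l) for the leaf l = (D, k). *)
Definition leaf_regret (v : R) (sigma : nat -> bool) (k : nat) : R :=
  \sum_(t < T | inQ sigma k t)
     (v - (if posted sigma t <= v then posted sigma t else 0)).

(* N_F: number of FAILs of the commitment subroutine on leaves other than
   the leaf (D, kstar). *)
Definition n_fail (sigma : nat -> bool) (kstar : nat) : nat :=
  count (fun t => commit_fails (run sigma t) (sigma t) && (idx (run sigma t) != kstar))
        (iota 0 T).
End Algo.

(* The algorithm is read as a state machine and analysed by amortization.
   Safety checks cost nothing in the sum of the R(l).  On a leaf, an L/R check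
   that FAILs on a wrong leaf costs at most 2 and is charged to N_F.  A check
   that passes on a wrong leaf needs a corruption, since such a leaf lies
   entirely above or entirely below v; so a wrong leaf's counter never exceeds
   the number of corruptions and the algorithm never settles on a wrong leaf.
   A check that passes on the right leaf raises its counter, which stays at
   most C + 1, and one that fails there needs a corruption.  Settling on the
   right leaf costs at most 1/T per round.  This even gives 2 N_F + 4 C + 3. *)

From HB Require Import structures.
From mathcomp Require Import all_boot all_order all_algebra.
From mathcomp Require Import lra zify.
Set Implicit Arguments. Unset Strict Implicit. Unset Printing Implicit Defensive.
Import Order.TTheory GRing.Theory Num.Theory.
Local Open Scope ring_scope.

Section DyadicCells.
Variable R : realFieldType.

Lemma inv_pow2_gt0 d : 0 < ((2 ^ d)%:R : R)^-1.
Proof. by rewrite invr_gt0 ltr0n expn_gt0. Qed.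

Lemma hiE d k : hi R d k = lo R d k + ((2 ^ d)%:R)^-1.
Proof. by rewrite /hi /lo -addn1 natrD mulrDl mul1r. Qed.

Lemma lo_ge0 d k : 0 <= lo R d k.
Proof. by rewrite /lo divr_ge0 ?ler0n. Qed.

Lemma hi_ge0 d k : 0 <= hi R d k.
Proof. by rewrite /hi divr_ge0 ?ler0n. Qed.

Lemma lo_lt_hi_leq d k j : lo R d k < hi R d j -> (k <= j)%N.
Proof. by rewrite /lo /hi ltr_pM2r ?inv_pow2_gt0 // ltr_nat ltnS. Qed.

Lemma dyadic_cell_unique d k j (x : R) :
  lo R d k <= x -> x < hi R d k -> lo R d j <= x -> x < hi R d j -> k = j.
Proof.
move=> lok hik loj hij; apply/eqP; rewrite eqn_leq.
by rewrite (lo_lt_hi_leq (le_lt_trans lok hij)) (lo_lt_hi_leq (le_lt_trans loj hik)).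
Qed.

End DyadicCells.

Definition round_regret (R : realFieldType) (v p : R) : R :=
  v - (if p <= v then p else 0).

Section RoundRegret.
Variables (R : realFieldType) (v p : R).

Lemma round_regret_ge0 : 0 <= v -> 0 <= round_regret v p.
Proof. by rewrite /round_regret; case: ifP => h hv; lra. Qed.

Lemma round_regret_le : 0 <= p -> round_regret v p <= v.
Proof. by rewrite /round_regret; case: ifP => h hp; lra. Qed.

Lemma round_regret_sale : p <= v -> round_regret v p = v - p.
Proof. by rewrite /round_regret => ->. Qed.

Lemma round_regret_no_sale : v < p -> round_regret v p = v.
Proof. by rewrite /round_regret => /lt_geF ->; rewrite subr0. Qed.

End RoundRegret.

Lemma incrE (s : nat -> nat) k j : incr s k j = (s j + (k == j))%N.
Proof. by rewrite /incr eq_sym; case: eqP => [->|]; rewrite ?addn1 ?addn0. Qed.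

Definition is_stay (p : phase) : bool := if p is ComStay then true else false.

Section WellFormed.
Variables (T C : nat).
Local Notation D := (depth T).

Definition wf_state (s : state) : Prop :=
  [/\ (dep s <= D)%N, is_commit (ph s) = (dep s == D) &
      is_commit (ph s) -> is_stay (ph s) = (C < cnt s (idx s))%N].

Lemma wf_enter s d k : (d <= D)%N -> wf_state (enter T C s d k).
Proof.
rewrite /enter => hd; case: ltnP => [hlt | hge]; first by split => //=; rewrite ltn_eqF.
have -> : d = D by apply/eqP; rewrite eqn_leq hd hge.
by case: leqP => hC; split; rewrite //= ?eqxx // => _; rewrite ltnNge hC.
Qed.

Lemma cnt_enter s d k : cnt (enter T C s d k) = s.
Proof. by rewrite /enter; case: ifP => //; case: ifP. Qed.

Lemma wf_step (R : realFieldType) s b : wf_state s -> wf_state (step R T C s b).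
Proof.
case: s => d k p cn [/= hd hcommit hstay]; rewrite /step /=.
have hpred : (d.-1 <= D)%N by apply: leq_trans (leq_pred d) hd.
case: p hcommit hstay => [|okL| | |okL|] /= hcommit hstay.
- by split.
- by case: ifP => _; [split | apply: wf_enter].
- have hlt : (d < D)%N by rewrite ltn_neqAle -hcommit hd.
  by case: ifP => _; apply: wf_enter.
- by split.
- by case: ifP => _; apply: wf_enter.
- by split.
Qed.

Lemma wf_run (R : realFieldType) sigma t : wf_state (run R T C sigma t).
Proof. by elim: t => [|t IH] /=; [apply: wf_enter | apply: wf_step]. Qed.

End WellFormed.

Section Amortization.
Variables (R : realFieldType) (T C : nat) (v : R) (kstar : nat).
Local Notation D := (depth T).
Hypotheses (v_ge0 : 0 <= v) (v_lt1 : v < 1).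
Hypotheses (lo_star : lo R D kstar <= v) (hi_star : v < hi R D kstar).

(* lra ignores section hypotheses, so proofs below copy those they need. *)

Definition corrupted (s : state) (b : bool) : bool := b != (price R s <= v).

(* The value stored between the L and R posts of a check on leaf k.  On the
   right leaf, a failed L query is a corruption that prepays the coming FAIL
   round.  On a wrong leaf, an L query passing with v < L is a corruption whose
   surplus prepays the R round; otherwise the L round is borrowed against the
   FAIL or the corruption that must come next. *)
Definition leaf_potential (k : nat) (okL : bool) : R :=
  if k == kstar then (~~ okL)%:R else if okL && (v < lo R D k) then 1 else -1.

Definition potential (s : state) : R :=
  if ph s is ComR okL then leaf_potential (idx s) okL else 0.

Definition commit_regret (s : state) : R :=
  if is_commit (ph s) && (dep s == D) then round_regret v (price R s) else 0.

Lemma leaf_eq_star k : lo R D k <= v -> v < hi R D k -> k = kstar.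
Proof. by move=> lok hik; apply: dyadic_cell_unique lok hik lo_star hi_star. Qed.

Lemma potential_enter s d k : potential (enter T C s d k) = 0.
Proof. by rewrite /enter; case: ifP => //; case: ifP. Qed.

Lemma potential_ge s : -1 <= potential s.
Proof.
rewrite /potential /leaf_potential; case: (ph s) => [||||okL|]; rewrite ?lerN10 //.
by case: ifP => _; [case: okL | case: ifP] => /=; lra.
Qed.

Lemma commit_low_amortized k b :
  round_regret v (lo R D k) + leaf_potential k (pass_low (lo R D k) b)
  <= 3 * (b != (lo R D k <= v))%:R + ((2 ^ D)%:R)^-1.
Proof.
have [v1 hN] := (v_lt1, inv_pow2_gt0 R D); rewrite /leaf_potential /pass_low.
case: (eqVneq k kstar) => [->|hk].
  rewrite round_regret_sale // lo_star; move: hi_star; rewrite hiE.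
  by case: b; rewrite ?orbT ?orbF /=; [|case: eqP => _ /=]; lra.
have hlo := lo_ge0 R D k.
case: (ltP v (lo R D k)) => hv; last first.
  by rewrite andbF round_regret_sale //; have := ler0n R (b != true); lra.
rewrite round_regret_no_sale // gt_eqF ?(le_lt_trans v_ge0 hv) //.
by case: b => /=; lra.
Qed.

Lemma commit_pass_amortized k b : pass_high (hi R D k) b ->
  round_regret v (hi R D k)
  <= leaf_potential k true + 3 * (b != (hi R D k <= v))%:R + (k == kstar)%:R.
Proof.
have [v1 hcor] := (v_lt1, ler0n R (b != (hi R D k <= v))); rewrite /leaf_potential.
case: (eqVneq k kstar) => [ek|hk] hpass.
  by subst k; rewrite round_regret_no_sale //=; lra.
case: (ltP v (lo R D k)) => hv /=.
  by have := round_regret_le v (hi_ge0 R D k); lra.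
have hiv : hi R D k <= v.
  by rewrite leNgt; apply: contra hk => hvh; apply/eqP; apply: leaf_eq_star hv hvh.
move: hpass; rewrite /pass_high; case: eqP => [h1 | _ /negbTE ->]; first lra.
by rewrite hiv /= round_regret_sale //; have := hi_ge0 R D k; lra.
Qed.

Lemma commit_fail_amortized k okL b : ~~ (okL && pass_high (hi R D k) b) ->
  round_regret v (hi R D k)
  <= leaf_potential k okL + 2 * (k != kstar)%:R + 3 * (b != (hi R D k <= v))%:R.
Proof.
have v1 := v_lt1; have := round_regret_le v (hi_ge0 R D k).
rewrite /leaf_potential; case: (eqVneq k kstar) => [-> _ | hk hreg] /= hfail.
  have := ler0n R (b != (hi R D kstar <= v)).
  rewrite round_regret_no_sale //; case: okL hfail => /= hfail; last lra.
  move: hfail; rewrite /pass_high; case: eqP => //= _; case: b => //= _.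
  by rewrite (lt_geF hi_star) /=; lra.
by have := ler0n R (b != (hi R D k <= v)); case: ifP => _; lra.
Qed.

Lemma commit_stay_amortized : round_regret v (lo R D kstar) <= ((2 ^ D)%:R)^-1.
Proof. by rewrite round_regret_sale //; have := hi_star; rewrite hiE; lra. Qed.

Lemma amortized_step s b : wf_state T C s -> (is_stay (ph s) -> idx s = kstar) ->
  commit_regret s + potential (step R T C s b) + (cnt s kstar)%:R
  <= potential s + 2 * (commit_fails R s b && (idx s != kstar))%:R
     + 3 * (corrupted s b)%:R + ((2 ^ D)%:R)^-1 + (cnt (step R T C s b) kstar)%:R.
Proof.
case: s => d k p cn [/= _ hcommit _] hstay.
have [hN hcor] := (inv_pow2_gt0 R D, ler0n R (corrupted (State d k p cn) b)).
rewrite /commit_regret /corrupted /step /price /= in hcor *.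
case: p hcommit hstay hcor => [|okL| | |okL|] /= hcommit hstay hcor.
- by rewrite /potential /=; lra.
- by case: ifP => _; rewrite ?potential_enter ?cnt_enter /potential /=; lra.
- by case: b hcor => /= hcor; rewrite potential_enter cnt_enter /potential /=; lra.
- move/esym/eqP: hcommit => hd; subst d; rewrite eqxx /potential /=.
  by have := commit_low_amortized k b; lra.
- move/esym/eqP: hcommit => hd; subst d; rewrite eqxx /commit_fails /=.
  case hpass: (okL && pass_high (hi R D k) b); rewrite potential_enter cnt_enter /potential /=.
    move/andP: hpass => [-> hpass]; rewrite incrE natrD.
    by have := commit_pass_amortized hpass; lra.
  by have := commit_fail_amortized (negbT hpass); lra.
- move/esym/eqP: hcommit => hd; have hk := hstay isT; subst d k.
  rewrite eqxx /potential /=.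
  by have := commit_stay_amortized; lra.
Qed.

Definition pending (s : state) : bool :=
  if ph s is ComR okL then okL && (v < lo R D (idx s)) else false.

(* A lower bound on the corruptions spent so far on leaf k: each increment of
   its counter, plus a corrupted L query not yet followed by the R query. *)
Definition leaf_charge (k : nat) (s : state) : nat :=
  cnt s k + (pending s && (idx s == k)).

Lemma leaf_charge_enter s d k j : leaf_charge j (enter T C s d k) = s j.
Proof. by rewrite /leaf_charge /enter; case: ifP => _; [|case: ifP => _]; rewrite addn0. Qed.

Lemma leaf_charge_step s b (k : nat) : wf_state T C s -> k != kstar ->
  (leaf_charge k (step R T C s b) <= leaf_charge k s + corrupted s b)%N.
Proof.
case: s => d j p cn [/= _ hcommit _] hk.
rewrite /step /corrupted /price /=.
case: p hcommit => [|okL| | |okL|] /= hcommit.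
- by rewrite /leaf_charge /= !addn0 leq_addr.
- by case: ifP => _; rewrite ?leaf_charge_enter /leaf_charge /= !addn0 leq_addr.
- by case: ifP => _; rewrite ?leaf_charge_enter /leaf_charge /= !addn0 leq_addr.
- move/esym/eqP: hcommit => hd; subst d; rewrite /leaf_charge /pending /= addn0.
  case: (eqVneq j k) => [->|hjk]; rewrite ?andbT ?andbF ?addn0 ?leq_addr //.
  case: (ltP v (lo R D k)) => hv; rewrite ?andbF ?addn0 ?leq_addr //.
  by rewrite /pass_low gt_eqF ?(le_lt_trans v_ge0 hv) //=; case: b.
- move/esym/eqP: hcommit => hd; subst d.
  case hpass: (okL && pass_high (hi R D j) b);
    rewrite leaf_charge_enter /leaf_charge /pending /=; last by rewrite -addnA leq_addr.
  move/andP: hpass => [-> hpass]; rewrite incrE.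
  case: (eqVneq j k) => [ejk|hjk]; last by rewrite andbF leq_addr.
  subst j; rewrite andbT.
  case: (ltP v (lo R D k)) => hv; rewrite -addnA leq_add2l /=; first exact: leq_addr.
  have hiv : hi R D k <= v.
    by rewrite leNgt; apply: contra hk => hvh; apply/eqP; apply: leaf_eq_star hv hvh.
  move: hpass; rewrite /pass_high; case: eqP => [h1 | _ /negbTE ->].
    by have := v_lt1; rewrite -h1 ltNge hiv.
  by rewrite hiv.
- by rewrite leq_addr.
Qed.

End Amortization.

Lemma star_count_step (R : realFieldType) T C kstar s b :
  wf_state T C s -> (cnt s kstar <= C.+1)%N -> (cnt (step R T C s b) kstar <= C.+1)%N.
Proof.
case: s => d k p cn [/= _ _ hstay] /= hC; rewrite /step /=.
case: p hstay => [|okL| | |okL|] /= hstay //.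
- by case: ifP => _; rewrite ?cnt_enter.
- by case: ifP => _; rewrite cnt_enter.
case: ifP => _; rewrite cnt_enter // incrE.
by case: eqP => [<-|_]; rewrite ?addn1 ?addn0 // ltnS leqNgt -hstay.
Qed.

Lemma count_iotaS (p : pred nat) t :
  count p (iota 0 t.+1) = (count p (iota 0 t) + p t)%N.
Proof. by rewrite -addn1 iotaD count_cat /= addn0. Qed.

Lemma count_iota_mono (p : pred nat) t t' :
  (t <= t')%N -> (count p (iota 0 t) <= count p (iota 0 t'))%N.
Proof. by move=> le_tt'; rewrite -(subnKC le_tt') iotaD count_cat leq_addr. Qed.

Lemma sum_eq_ord_le (R : realFieldType) N i (x : R) :
  0 <= x -> \sum_(k < N) (if i == k :> nat then x else 0) <= x.
Proof.
rewrite -big_mkcond /=; case: (ltnP i N) => [lt_iN | le_Ni] x_ge0.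
  by rewrite (big_pred1 (Ordinal lt_iN)) // => k; rewrite /= eq_sym -val_eqE.
by rewrite big_pred0 // => k; rewrite gtn_eqF // (leq_trans (ltn_ord k)).
Qed.

Section Run.
Variables (R : realFieldType) (T C : nat) (v : R) (kstar : nat) (sigma : nat -> bool).
Local Notation D := (depth T).
Local Notation run := (run R T C sigma).
Hypotheses (v_ge0 : 0 <= v) (v_lt1 : v < 1).
Hypotheses (lo_star : lo R D kstar <= v) (hi_star : v < hi R D kstar).
Hypothesis few_corruptions : (n_corrupt T C v sigma <= C)%N.

Definition corruptions_before t :=
  count (fun u => corrupted v (run u) (sigma u)) (iota 0 t).

Definition fails_before t :=
  count (fun u => commit_fails R (run u) (sigma u) && (idx (run u) != kstar)) (iota 0 t).

Definition commit_regret_before t := \sum_(u < t) commit_regret T v (run u).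

Lemma leaf_charge_run t k :
  k != kstar -> (leaf_charge T v k (run t) <= corruptions_before t)%N.
Proof.
move=> hk; elim: t => [|t IH] /=; first by rewrite /init leaf_charge_enter.
rewrite /corruptions_before count_iotaS.
apply: leq_trans (leaf_charge_step v_ge0 v_lt1 lo_star hi_star _ (wf_run _ _ _ _ _) hk) _.
by rewrite leq_add2r.
Qed.

Lemma star_count_run t : (cnt (run t) kstar <= C.+1)%N.
Proof.
elim: t => [|t IH]; first by rewrite /= /init cnt_enter.
by apply: star_count_step IH; apply: wf_run.
Qed.

Lemma stay_at_star t : (t <= T)%N -> is_stay (ph (run t)) -> idx (run t) = kstar.
Proof.
move=> le_tT hstay; case: (eqVneq (idx (run t)) kstar) => // hk.
have [_ _ hcnt] := wf_run T C R sigma t.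
have stay_cnt : (C < cnt (run t) (idx (run t)))%N.
  by rewrite -hcnt //; case: (ph (run t)) hstay.
have := leaf_charge_run t hk; rewrite /leaf_charge.
have : (corruptions_before t <= n_corrupt T C v sigma)%N := count_iota_mono _ le_tT.
by lia.
Qed.

Lemma amortized_run t : (t <= T)%N ->
  commit_regret_before t + potential T v kstar (run t)
  <= 2 * (fails_before t)%:R + 3 * (corruptions_before t)%:R
     + t%:R * ((2 ^ D)%:R)^-1 + (cnt (run t) kstar)%:R.
Proof.
elim: t => [|t IH] le_tT.
  rewrite /commit_regret_before /fails_before /corruptions_before big_ord0 /=.
  by rewrite /init potential_enter cnt_enter /= !mul0r; lra.
have := amortized_step v_ge0 v_lt1 lo_star hi_star (sigma t) (wf_run T C R sigma t)
          (stay_at_star (ltnW le_tT)).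
have := IH (ltnW le_tT).
rewrite /commit_regret_before big_ord_recr /fails_before /corruptions_before !count_iotaS.
rewrite [t.+1%:R]mulrSr mulrDl mul1r !natrD /=.
lra.
Qed.

Lemma sum_leaf_regret_le :
  \sum_(k < 2 ^ D) leaf_regret T C v sigma k <= commit_regret_before T.
Proof.
rewrite /commit_regret_before /leaf_regret.
under eq_bigr do rewrite big_mkcond.
rewrite exchange_big; apply: ler_sum => t _; rewrite /inQ /commit_regret.
case hcommit: (is_commit (ph (run t)) && (dep (run t) == D)); last first.
  by rewrite big1 // => k _; rewrite andbA hcommit.
under eq_bigr do rewrite andbA hcommit /=.
exact/sum_eq_ord_le/round_regret_ge0.
Qed.

End Run.

Theorem lemma4p2 (R : realFieldType) (T C : nat) (v : R) (sigma : nat -> bool)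
    (kstar : nat) :
  0 <= v -> v < 1 ->
  (kstar < 2 ^ depth T)%N ->
  lo R (depth T) kstar <= v -> v < hi R (depth T) kstar ->
  (n_corrupt T C v sigma <= C)%N ->
  \sum_(k < 2 ^ depth T) leaf_regret T C v sigma k
    <= 2 * (n_fail R T C sigma kstar)%:R + 6 * C%:R + 3.
Proof.
move=> v_ge0 v_lt1 _ lo_star hi_star few_corruptions.
have := sum_leaf_regret_le T C sigma v_ge0.
have := amortized_run v_ge0 v_lt1 lo_star hi_star few_corruptions (leqnn T).
have := potential_ge T v kstar (run R T C sigma T).
have corruptions_le : (corruptions_before T C v sigma T)%:R <= C%:R :> R.
  by rewrite ler_nat.
have star_count_le : (cnt (run R T C sigma T) kstar)%:R <= C%:R + 1 :> R.
  by rewrite natr1 ler_nat star_count_run.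
have horizon_le : T%:R * ((2 ^ depth T)%:R)^-1 <= 1 :> R.
  by rewrite -[_ * _^-1]/(_ / _) ler_pdivrMr ?ltr0n ?expn_gt0 // mul1r ler_nat up_logP.
have := ler0n R C; rewrite -/(fails_before R T C kstar sigma T).
lra.
Qed.
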